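(* Let $\Theta$ be a finite set, $c\in\mathbb{R}^{\Theta}$, and let $\mathcal{Y}=((b_1,v_1),\dots,(b_m,v_m))$ be a finite ordered list with $b_j\in\mathbb{R}^{\Theta}_{\ge0}\setminus\{0\}$, $v_j\in\mathbb{R}$. Define $\Upsilon_v(b)$ for $b\in\mathbb{R}^\Theta_{\ge0}$ by: if no $j$ satisfies $v_j-c^Tb_j>0$, set $\Upsilon_v(b)=c^Tb$; otherwise, with $j^*$ the first index with $v_{j^*}-c^Tb_{j^*}>0$, set $$\Upsilon_v(b)=c^Tb+\Big(\min_{\vartheta:\,b_{j^*}(\vartheta)>0}\frac{b(\vartheta)}{b_{j^*}(\vartheta)}\Big)(v_{j^*}-c^Tb_{j^*}).$$ Similarly, for a list $((\zeta_1,w_1),\dots,(\zeta_m,w_m))$ with $\zeta_j\in\mathbb{R}^\Theta_{\ge0}\setminus\{0\}$, define $\Upsilon_w(\lambda)$ for $\lambda\in\mathbb{R}^\Theta_{\ge0}$ by: if no $j$ satisfies $w_j-c^T\zeta_j<0$, $\Upsilon_w(\lambda)=c^T\lambda$; otherwise with $j^*$ the first such index, $$\Upsilon_w(\lambda)=c^T\lambda+\Big(\min_{\vartheta:\,\zeta_{j^*}(\vartheta)>0}\frac{\lambda(\vartheta)}{\zeta_{j^*}(\vartheta)}\Big)(w_{j^*}-c^T\zeta_{j^*}).$$ Then the constraint $V\le\Upsilon_v(b)$ is linear in the variables $(V,b)$ and the constraint $W\ge\Upsilon_w(\lambda)$ is linear in $(W,\lambda)$: there exist finitely many affine functions $\ell_1,\dots,\ell_K$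 on $\mathbb{R}^\Theta$ such that for all $V\in\mathbb{R}$, $b\in\mathbb{R}^\Theta_{\ge0}$, $V\le\Upsilon_v(b)$ iff $V\le\ell_k(b)$ for all $k$; and finitely many affine $m_1,\dots,m_L$ such that for all $W\in\mathbb{R}$, $\lambda\in\mathbb{R}^\Theta_{\ge0}$, $W\ge\Upsilon_w(\lambda)$ iff $W\ge m_l(\lambda)$ for all $l$.
   Context: These are the sawtooth approximations used in a point-based value iteration algorithm: $\Upsilon_v$ (SAWTOOTH-A) is computed from a set of ''corner'' belief-value pairs, whose values form the vector $c$ (the value at the corner point of index $\vartheta$ gives $c(\vartheta)$), and a set $\mathcal{Y}$ of non-corner belief-value pairs; $\Upsilon_w$ (SAWTOOTH-D) is the analogous construction for vectors in $\mathbb{R}^{|\Theta|}$. *)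

From HB Require Import structures.
From mathcomp Require Import all_boot all_order all_algebra.
Set Implicit Arguments. Unset Strict Implicit. Unset Printing Implicit Defensive.
Import Order.TTheory GRing.Theory Num.Theory.
Local Open Scope ring_scope.

Section Sawtooth.
Variables (R : realFieldType) (Theta : finType).

Definition dotp (c b : Theta -> R) : R := \sum_(t : Theta) c t * b t.

(* min over { t | z t > 0 } of b t / z t  (0 if that set is empty; it is
   never empty in the uses below since z is nonnegative and nonzero) *)
Definition minratio (z b : Theta -> R) : R :=
  match [seq b t / z t | t <- enum Theta & 0 < z t] with
  | [::] => 0
  | x :: s => foldr Num.min x s
  end.

Fixpoint upsilon_v (c : Theta -> R) (Y : seq ((Theta -> R) * R)) (b : Theta -> R) : R :=
  match Y with
  | [::] => dotp c b
  | (bj, vj) :: Y' =>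
      if 0 < vj - dotp c bj
      then dotp c b + minratio bj b * (vj - dotp c bj)
      else upsilon_v c Y' b
  end.

Fixpoint upsilon_w (c : Theta -> R) (Z : seq ((Theta -> R) * R)) (l : Theta -> R) : R :=
  match Z with
  | [::] => dotp c l
  | (zj, wj) :: Z' =>
      if wj - dotp c zj < 0
      then dotp c l + minratio zj l * (wj - dotp c zj)
      else upsilon_w c Z' l
  end.

Definition affine_eval (f : (Theta -> R) * R) (b : Theta -> R) : R :=
  dotp f.1 b + f.2.

Definition nonneg_vec (b : Theta -> R) : Prop := forall t, 0 <= b t.

Definition nonneg_nonzero (b : Theta -> R) : Prop := nonneg_vec b /\ exists t, b t != 0.

End Sawtooth.

From HB Require Import structures.
From mathcomp Require Import all_boot all_order all_algebra.
From Stdlib Require List.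
Import Order.TTheory GRing.Theory Num.Theory.
Local Open Scope ring_scope.

(** The branch taken by [upsilon_v c Y] depends only on [c] and [Y], not on
    [b].  So [upsilon_v c Y b] is either [c^T b] or [c^T b + d * min_t b t / z t]
    for fixed [z] and [d > 0], i.e. the pointwise minimum of the finitely many
    affine maps [b |-> c^T b + d * b t / z t]; a hypograph constraint on a
    minimum of affine maps is a conjunction of affine constraints.  Negating
    [c] and the [w_j] turns [upsilon_w] into [- upsilon_v], which exchanges
    minima with maxima.  Neither nonnegativity of [b] nor the hypotheses on
    [Y] and [Z] are needed; on an empty support the junk value [0] of
    [minratio] still leaves an affine function. *)

Lemma all_In (T : Type) (p : pred T) (s : seq T) :
  all p s <-> forall x, List.In x s -> p x.
Proof. exact: List.forallb_forall. Qed.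

Lemma le_foldr_min (disp : Order.disp_t) (T : orderType disp) (x y : T) s :
  (x <= foldr Order.min y s)%O = all (fun z => x <= z)%O (y :: s).
Proof. by elim: s => [|z s IHs] /=; rewrite ?andbT // le_min IHs andbCA. Qed.

Section AffineEnvelopes.
Context {R : realFieldType} {Theta : finType}.
Implicit Types (c z b : Theta -> R) (F : (Theta -> R) -> R).

Definition is_min_affine F (ls : seq ((Theta -> R) * R)) :=
  forall V b, (V <= F b) = all (fun f => V <= affine_eval f b) ls.

Definition is_max_affine F (ms : seq ((Theta -> R) * R)) :=
  forall W b, (F b <= W) = all (fun f => affine_eval f b <= W) ms.

Lemma dotp_min_affine c : is_min_affine (dotp c) [:: (c, 0)].
Proof. by move=> V b; rewrite /= /affine_eval addr0 andbT. Qed.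

Lemma dotpD_indicator c b (k : R) (t : Theta) :
  dotp (fun u => c u + k * (u == t)%:R) b = dotp c b + k * b t.
Proof.
rewrite /dotp; under eq_bigr do rewrite mulrDl.
rewrite big_split /=; congr (_ + _).
rewrite (bigD1 t) //= eqxx mulr1 big1 ?addr0 // => u /negbTE ->.
by rewrite mulr0 mul0r.
Qed.

Lemma dotpN c b : dotp (fun t => - c t) b = - dotp c b.
Proof. by rewrite /dotp -sumrN; apply: eq_bigr => t _; rewrite mulNr. Qed.

Definition ratio_affine c z (d : R) (t : Theta) : (Theta -> R) * R :=
  (fun u => c u + d / z t * (u == t)%:R, 0).

Lemma affine_eval_ratio c z d t b :
  affine_eval (ratio_affine c z d t) b = dotp c b + b t / z t * d.
Proof.
by rewrite /affine_eval /= dotpD_indicator addr0 [d / z t * _]mulrC mulrA mulrAC.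
Qed.

Lemma le_minratio {z t0 T} :
  [seq t <- enum Theta | 0 < z t] = t0 :: T -> forall b (x : R),
  (x <= minratio z b) = all (fun t => x <= b t / z t) (t0 :: T).
Proof.
rewrite /minratio => -> b x.
by rewrite le_foldr_min -(map_cons (fun t => b t / z t)) all_map.
Qed.

Lemma sawtooth_min_affine c z (d : R) : 0 < d ->
  exists ls, is_min_affine (fun b => dotp c b + minratio z b * d) ls.
Proof.
move=> d_gt0; case Ez: [seq t <- enum Theta | 0 < z t] => [|t0 T].
  exists [:: (c, 0)] => V b.
  by rewrite /minratio Ez mul0r addr0 dotp_min_affine.
exists (map (ratio_affine c z d) (t0 :: T)) => V b.
rewrite all_map -lerBlDl -ler_pdivrMr // (le_minratio Ez).
by apply: eq_all => t /=; rewrite affine_eval_ratio -lerBlDl ler_pdivrMr.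
Qed.

Lemma upsilon_v_min_affine c Y : exists ls, is_min_affine (upsilon_v c Y) ls.
Proof.
elim: Y => [|[z v] Y [ls IHY]]; first by exists [:: (c, 0)]; apply: dotp_min_affine.
have [d_gt0|d_le0] := boolP (0 < v - dotp c z).
  have [ls' Fls'] := sawtooth_min_affine c z _ d_gt0.
  by exists ls' => V b /=; rewrite d_gt0 Fls'.
by exists ls => V b /=; rewrite (negbTE d_le0) IHY.
Qed.

Lemma upsilon_wE c Z l :
  upsilon_w c Z l = - upsilon_v (fun t => - c t) [seq (p.1, - p.2) | p <- Z] l.
Proof.
elim: Z => [|[z w] Z IHZ] /=; first by rewrite dotpN opprK.
rewrite !dotpN -opprD oppr_gt0 IHZ.
by case: ifP => // _; rewrite mulrN -opprD opprK.
Qed.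

Definition affine_opp (f : (Theta -> R) * R) : (Theta -> R) * R :=
  (fun t => - f.1 t, - f.2).

Lemma min_affineN F ls :
  is_min_affine F ls -> is_max_affine (fun b => - F b) (map affine_opp ls).
Proof.
move=> Fls W b; rewrite lerNl Fls all_map.
by apply: eq_all => f /=; rewrite /affine_eval dotpN -opprD lerNl.
Qed.

Lemma upsilon_w_max_affine c Z : exists ms, is_max_affine (upsilon_w c Z) ms.
Proof.
have [ls Yls] := upsilon_v_min_affine (fun t => - c t) [seq (p.1, - p.2) | p <- Z].
exists (map affine_opp ls) => W l; rewrite upsilon_wE.
exact: min_affineN.
Qed.

End AffineEnvelopes.

Theorem lemma4 (R : realFieldType) (Theta : finType) (c : Theta -> R)
    (Y : seq ((Theta -> R) * R)) (Z : seq ((Theta -> R) * R))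
    (hY : List.Forall (fun p => nonneg_nonzero p.1) Y)
    (hZ : List.Forall (fun p => nonneg_nonzero p.1) Z) :
  (exists ls : seq ((Theta -> R) * R),
     forall (V : R) (b : Theta -> R), nonneg_vec b ->
       (V <= upsilon_v c Y b <-> forall f, List.In f ls -> V <= affine_eval f b))
  /\
  (exists ms : seq ((Theta -> R) * R),
     forall (W : R) (l : Theta -> R), nonneg_vec l ->
       (upsilon_w c Z l <= W <-> forall f, List.In f ms -> affine_eval f l <= W)).
Proof.
split.
- have [ls Yls] := upsilon_v_min_affine c Y.
  by exists ls => V b _; rewrite Yls; apply: all_In.
- have [ms Zms] := upsilon_w_max_affine c Z.
  by exists ms => W l _; rewrite Zms; apply: all_In.
Qed.
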